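(* Let $I$ be a set and $\mathbb K$ a commutative ring. The map sending a weighted troupe $\boldsymbol{\tau}\colon\mathsf{BPT}(I)\to\mathbb K$ to its restriction $\boldsymbol{\tau}|_{\mathsf{Branch}(I)}$ is a bijection from the set of weighted troupes to the set of all functions $\mathsf{Branch}(I)\to\mathbb K$.
   Context: A binary plane tree is a rooted tree in which each child of a vertex is designated as a left child or a right child, and no vertex has more than one left child or more than one right child; trees are considered up to isomorphism, and the empty tree $\varnothing$ is allowed. A branch is a nonempty binary plane tree in which every vertex has at most one child. Let $\boxminus$ be a special symbol not a vertex of any tree. An $I$-coloring of a binary plane tree $T$ is a function $\chi\colon T\sqcup\{\boxminus\}\to I$. $\mathsf{BPT}(I)$ denotes the set of $I$-colored binary plane trees (including the empty tree) and $\mathsf{Branch}(I)$ the set of $I$-colored branches. Insertion: for nonempty $I$-colored trees $T_1,T_2$ with colorings $\chi_1,\chi_2$ and a vertex $v$ of $T_1$, the tree $\nabla_v(T_1,T_2)$ is formed by creating a new vertex $v^*$ that takes the place of $v$ in $T_1$ (attached to $v$'s former parent on the same side), making $v$ (with its subtrees) the left child of $v^*$, and attaching $T_2$ as the right subtree of $v^*$; its coloring is $\chi_1$ on $T_1\sqcup\{\boxminus\}$, $\chi_2$ on the vertices of $T_2$, and $v^*$ gets color $\chi_2(\boxminus)$. A weighted troupe is a function $\boldsymbol{\tau}\colon\mathsf{BPT}(I)\to\mathbb K$ such that $\boldsymbol{\tau}(\varnothing)=0$ and $\boldsymbol{\tau}(\nabla_v(T_1,T_2))=\boldsymbol{\tau}(T_1)\boldsymbol{\tau}(T_2)$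 for all nonempty $T_1,T_2\in\mathsf{BPT}(I)$ and all vertices $v$ of $T_1$. *)

From mathcomp Require Import all_boot all_algebra.
Set Implicit Arguments. Unset Strict Implicit. Unset Printing Implicit Defensive.
Import GRing.Theory.
Local Open Scope ring_scope.

(* Binary plane trees (up to isomorphism) with vertex labels in I.
   [Leaf] is the empty tree; [Node l x r] is a root of colour x with left
   subtree l and right subtree r (an empty subtree = no child on that side). *)
Inductive ctree (I : Type) : Type :=
| Leaf : ctree I
| Node : ctree I -> I -> ctree I -> ctree I.
Arguments Leaf {I}.

(* An I-coloured binary plane tree: the colour of the special symbol ⊟
   together with the vertex-coloured tree. *)
Definition BPT (I : Type) : Type := (I * ctree I)%type.

Fixpoint chain (I : Type) (t : ctree I) : Prop :=
  match t with
  | Leaf => True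
  | Node l _ r => (l = Leaf \/ r = Leaf) /\ chain l /\ chain r
  end.

Definition is_branch (I : Type) (T : BPT I) : Prop :=
  T.2 <> Leaf /\ chain T.2.

Definition Branch (I : Type) : Type := {T : BPT I | is_branch T}.

(* insertion t1 c2 t2 t : t is the vertex part of ∇_v(T1,T2) for some vertex v
   of t1, where T2 = (c2, t2) (c2 = χ2(⊟) colours the new vertex v* ). *)
Inductive insertion (I : Type) (c2 : I) (t2 : ctree I) : ctree I -> ctree I -> Prop :=
| ins_root l x r : insertion c2 t2 (Node l x r) (Node (Node l x r) c2 t2)
| ins_left l l' x r : insertion c2 t2 l l' -> insertion c2 t2 (Node l x r) (Node l' x r)
| ins_right l x r r' : insertion c2 t2 r r' -> insertion c2 t2 (Node l x r) (Node l x r').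

Definition weighted_troupe (I : Type) (K : comPzRingType) (tau : BPT I -> K) : Prop :=
  (forall c : I, tau (c, Leaf) = 0) /\
  (forall (c1 : I) (t1 : ctree I) (c2 : I) (t2 : ctree I) (t : ctree I),
      t1 <> Leaf -> t2 <> Leaf -> insertion c2 t2 t1 t ->
      tau (c1, t) = tau (c1, t1) * tau (c2, t2)).

Definition WTroupe (I : Type) (K : comPzRingType) : Type :=
  {tau : BPT I -> K | weighted_troupe tau}.

Definition restrict_to_branches (I : Type) (K : comPzRingType)
  (tau : WTroupe I K) : Branch I -> K :=
  fun b => proj1_sig tau (proj1_sig b).

From mathcomp Require Import all_boot all_algebra.
From mathcomp Require Import zify.
From Stdlib Require Import ClassicalEpsilon FunctionalExtensionality ProofIrrelevance.
Set Implicit Arguments. Unset Strict Implicit. Unset Printing Implicit Defensive.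
Import GRing.Theory.
Local Open Scope ring_scope.

(* A vertex [x] with two children [l] and [r] is the new vertex of the
   insertion of [(x, r)] at the root of [l], so [tau (c, Node l x r)] is
   [tau (c, l) * tau (x, r)]; by induction on size a troupe is therefore
   determined by its values on branches.  Conversely, given [f] on branches,
   let [spine t] be the branch left after replacing every vertex with two
   children by its left subtree; set
   [tau (c, t) = f (c, spine t) * weight t], where [weight t] is the product
   of the values [tau (x, r)] of the deleted vertices [x] with right subtrees
   [r].  An insertion adds one deleted vertex and does not change the spine,
   which makes [tau] multiplicative. *)

Section Trees.
Variable I : Type.
Implicit Types (t l r : ctree I) (x : I).

Definition isLeaf t : bool := if t is Leaf then true else false.

Lemma isLeafF t : t <> Leaf -> isLeaf t = false.
Proof. by case: t. Qed.

Fixpoint tsize t : nat :=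
  if t is Node l _ r then (tsize l + tsize r).+1 else 0.

Lemma insertion_nonempty c2 t2 t1 t :
  insertion c2 t2 t1 t -> t1 <> Leaf /\ t <> Leaf.
Proof. by case. Qed.

Lemma insertion_tsize c2 t2 t1 t :
  insertion c2 t2 t1 t -> tsize t = (tsize t1 + tsize t2).+1.
Proof. by elim=> {t1 t} //= l l' x r _ ->; lia. Qed.

Lemma non_chain_insertion t : ~ chain t ->
  exists t1 c2 t2, [/\ t1 <> Leaf, t2 <> Leaf & insertion c2 t2 t1 t].
Proof.
elim: t => [|l IHl x r IHr] //= not_chain.
case: l IHl not_chain => [|a y b] IHl not_chain.
  have [|t1 [c2 [t2 [_ t2_nonempty ins]]]] := IHr.
    by move=> ?; apply: not_chain => /=; tauto.
  by exists (Node Leaf x t1), c2, t2; split=> //; apply: ins_right.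
case: r IHr not_chain => [|a' y' b'] IHr not_chain.
  have [|t1 [c2 [t2 [_ t2_nonempty ins]]]] := IHl.
    by move=> ?; apply: not_chain => /=; tauto.
  by exists (Node t1 x Leaf), c2, t2; split=> //; apply: ins_left.
by exists (Node a y b), x, (Node a' y' b'); split=> //; apply: ins_root.
Qed.

Fixpoint spine t : ctree I :=
  if t is Node l x r then
    if isLeaf l then Node Leaf x (spine r)
    else if isLeaf r then Node (spine l) x Leaf
    else spine l
  else Leaf.

Lemma spine_chain t : chain t -> spine t = t.
Proof.
elim: t => [|l IHl x r IHr] //= [[->|->] [chain_l chain_r]] /=.
  by rewrite IHr.
by case: l IHl chain_l => //= a y b IHl chain_l; rewrite IHl.
Qed.

Lemma spine_insertion c2 t2 t1 t : t2 <> Leaf ->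
  insertion c2 t2 t1 t -> spine t = spine t1.
Proof.
move=> t2_nonempty; elim=> [l x r|l l' x r ins IH|l x r r' ins IH] /=.
- by rewrite (isLeafF t2_nonempty).
- have [l_nonempty l'_nonempty] := insertion_nonempty ins.
  by rewrite (isLeafF l_nonempty) (isLeafF l'_nonempty) IH.
- have [r_nonempty r'_nonempty] := insertion_nonempty ins.
  by rewrite (isLeafF r_nonempty) (isLeafF r'_nonempty) IH.
Qed.

End Trees.

Lemma troupe_eq_of_branches (I : Type) (K : comPzRingType) (tau1 tau2 : BPT I -> K) :
  weighted_troupe tau1 -> weighted_troupe tau2 ->
  (forall T, is_branch T -> tau1 T = tau2 T) -> tau1 = tau2.
Proof.
move=> [leaf1 ins1] [leaf2 ins2] on_branches.
apply: functional_extensionality => -[c t].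
elim: {t}(tsize t).+1 {-2}t (ltnSn (tsize t)) c => // n IH t size_t c.
have [->|t_nonempty] := classic (t = Leaf); first by rewrite leaf1 leaf2.
have [chain_t|not_chain] := classic (chain t); first exact: on_branches.
have [t1 [c2 [t2 [t1_nonempty t2_nonempty ins]]]] := non_chain_insertion not_chain.
have size_ins := insertion_tsize ins.
rewrite (ins1 _ _ _ _ _ t1_nonempty t2_nonempty ins).
rewrite (ins2 _ _ _ _ _ t1_nonempty t2_nonempty ins).
by rewrite !IH //; lia.
Qed.

Section Extension.
Variables (I : Type) (K : comPzRingType) (f : Branch I -> K).

Definition branch_value (T : BPT I) : K :=
  match excluded_middle_informative (is_branch T) with
  | left is_br => f (exist _ T is_br)
  | right _ => 0
  end.

Fixpoint weight (t : ctree I) : K :=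
  if t is Node l x r then
    if isLeaf l then weight r
    else if isLeaf r then weight l
    else weight l * (branch_value (x, spine r) * weight r)
  else 1.

Definition troupe_ext (T : BPT I) : K :=
  if isLeaf T.2 then 0 else branch_value (T.1, spine T.2) * weight T.2.

Lemma weight_chain t : chain t -> weight t = 1.
Proof.
elim: t => [|l IHl x r IHr] //= [[->|->] [chain_l chain_r]] /=; first exact: IHr.
by case: l IHl chain_l => //= a y b IHl chain_l; rewrite IHl.
Qed.

Lemma weight_insertion c2 t2 t1 t : t2 <> Leaf -> insertion c2 t2 t1 t ->
  weight t = weight t1 * troupe_ext (c2, t2).
Proof.
rewrite /troupe_ext /= => t2_nonempty.
rewrite (isLeafF t2_nonempty); elim=> [l x r|l l' x r ins IH|l x r r' ins IH] /=.
- by rewrite (isLeafF t2_nonempty).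
- have [l_nonempty l'_nonempty] := insertion_nonempty ins.
  rewrite (isLeafF l_nonempty) (isLeafF l'_nonempty) IH.
  by case: (isLeaf r); rewrite // mulrAC.
- have [r_nonempty r'_nonempty] := insertion_nonempty ins.
  rewrite (isLeafF r_nonempty) (isLeafF r'_nonempty) IH (spine_insertion t2_nonempty ins).
  by case: (isLeaf l); rewrite // !mulrA.
Qed.

Lemma troupe_ext_troupe : weighted_troupe troupe_ext.
Proof.
split=> // c1 t1 c2 t2 t t1_nonempty t2_nonempty ins.
have [_ t_nonempty] := insertion_nonempty ins.
rewrite {1 2}/troupe_ext /= (isLeafF t_nonempty) (isLeafF t1_nonempty).
by rewrite (spine_insertion t2_nonempty ins) (weight_insertion t2_nonempty ins) mulrA.
Qed.

Lemma troupe_ext_branch (b : Branch I) : troupe_ext (proj1_sig b) = f b.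
Proof.
case: b => -[c t] is_br; have [t_nonempty chain_t] := is_br.
rewrite /troupe_ext /= (isLeafF t_nonempty) spine_chain // weight_chain // mulr1.
rewrite /branch_value; case: excluded_middle_informative => [is_br'|] //.
by rewrite (proof_irrelevance _ is_br' is_br).
Qed.

End Extension.

Theorem proposition3p2 (I : Type) (K : comPzRingType) :
  bijective (@restrict_to_branches I K).
Proof.
exists (fun f => exist _ (troupe_ext f) (troupe_ext_troupe f)).
- move=> [tau tau_troupe]; apply: eq_sig_hprop => [? ? ?|/=].
    exact: proof_irrelevance.
  apply: troupe_eq_of_branches => // [|T is_br]; first exact: troupe_ext_troupe.
  exact: (troupe_ext_branch _ (exist _ T is_br)).
- by move=> f; apply: functional_extensionality => b; apply: troupe_ext_branch.
Qed.
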